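(* Let $n$ be a positive integer and let $A(n)=(a_{ij})$, $p=p(n)$, $pp=pp(n)$, $b(n)$ be as in the context. Let $m\ge 1$ be an integer such that $\overline{p}=pm$ satisfies $\lfloor \overline{p}/2\rfloor> b(n)$, put $r=\lfloor\overline{p}/2\rfloor$, let $v$ be an integer with $v\ge pp+\overline{p}$, and let $B=(b_{ij})_{1\le i,j\le\overline{p}}$ be the $\overline{p}\times\overline{p}$ matrix with $b_{ij}=a_{v+i,v+j}$ if $i-r\le j\le i+r$; $b_{ij}=a_{v+i,v+j-\overline{p}}$ if $j>i+r$; $b_{ij}=a_{v+i,v+j+\overline{p}}$ if $j<i-r$. Then every row of $B$ contains exactly $n+1$ ones.
   Context: $\mathbb{N}=\{1,2,3,\dots\}$. Fix a positive integer $n$. The infinite $\{0,1\}$-matrix $A(n)=(a_{ij})_{i,j\in\mathbb{N}}$ is defined recursively. Its entries are determined row by row (row $1$ first), and within each row from left to right, so that $a_{kl}$ is determined after all $a_{ij}$ with $i<k$ and all $a_{kj}$ with $j<l$. One sets $a_{kl}=1$ if and only if all of the following hold: (1) $\sum_{j<l}a_{kj}<n+1$; (2) $\sum_{i<k}a_{il}<n+1$; (3) there is no pair $(i,j)$ with $1\le i<k$, $1\le j<l$ and $a_{ij}=a_{il}=a_{kj}=1$. Otherwise $a_{kl}=0$. The matrix $A(n)$ is eventually periodic along the diagonal: there exist $c\ge0$, $q\ge1$ with $a_{i+q,j+q}=a_{ij}$ for all $i>c$, $j\ge1$. The period $p=p(n)$ is the smallest $q\ge1$ for which such a $c$ exists,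 and the preperiod $pp=pp(n)$ is the smallest $c\ge 0$ with $a_{i+p,j+p}=a_{ij}$ for all $i>c$, $j\ge 1$. Define $b(n)=\max\{|j-i| : i,j\ge1,\ a_{ij}=1,\ i>pp(n)\}$. *)

From mathcomp Require Import all_boot.
Set Implicit Arguments. Unset Strict Implicit. Unset Printing Implicit Defensive.

(* Indices are 1-based; entries at index 0 are never used (they evaluate to false). *)

(* decide n A k l s : value of a_{k l}, where A i j gives a_{ij} for all i < k,
   and s = [:: a_{k,1}; ...; a_{k,l-1}].  The three conjuncts are conditions
   (1) sum_{j<l} a_{kj} < n+1, (2) sum_{i<k} a_{il} < n+1, and (3) there is no
   (i,j) with 1 <= i < k, 1 <= j < l and a_{ij} = a_{il} = a_{kj} = 1. *)
Definition decide (n : nat) (A : nat -> nat -> bool) (k l : nat) (s : seq bool) : bool :=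
  [&& count id s < n.+1,
      count (fun i => A i l) (iota 1 k.-1) < n.+1 &
      ~~ has (fun i => has (fun j => [&& A i j, A i l & nth false s j.-1])
                           (iota 1 l.-1))
             (iota 1 k.-1)].

Fixpoint rowpref (n : nat) (A : nat -> nat -> bool) (k l : nat) : seq bool :=
  match l with
  | 0 => [::]
  | l'.+1 => let s := rowpref n A k l' in rcons s (decide n A k l s)
  end.

Definition lookup (T : seq (seq bool)) (i j : nat) : bool :=
  nth false (nth [::] T i.-1) j.-1.

(* the first k rows of A(n), each truncated to its first w entries;
   since a_{kl} only depends on entries a_{ij} with i <= k, j <= l,
   this is exactly the top-left k x w block of A(n) *)
Fixpoint tab (n w k : nat) : seq (seq bool) :=
  match k with
  | 0 => [::]
  | k'.+1 => let P := tab n w k' in rcons P (rowpref n (lookup P) k'.+1 w)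
  end.

Definition a (n i j : nat) : bool :=
  let N := maxn i j in lookup (tab n N N) i j.

Definition periodic_from (n q c : nat) : Prop :=
  forall i j, c < i -> 1 <= j -> a n (i + q) (j + q) = a n i j.

Definition is_period (n p : nat) : Prop :=
  [/\ 1 <= p, (exists c, periodic_from n p c)
    & forall q, 1 <= q -> (exists c, periodic_from n q c) -> p <= q].

Definition is_preperiod (n p pp : nat) : Prop :=
  periodic_from n p pp /\ forall c, periodic_from n p c -> pp <= c.

Definition absdiff (i j : nat) : nat := maxn i j - minn i j.

Definition is_bmax (n pp bn : nat) : Prop :=
  (exists i j, [/\ 1 <= i, 1 <= j, a n i j, pp < i & absdiff j i = bn]) /\
  (forall i j, 1 <= i -> 1 <= j -> a n i j -> pp < i -> absdiff j i <= bn).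

Definition Bmat (n pbar v i j : nat) : bool :=
  let r := pbar./2 in
  if (i <= j + r) && (j <= i + r) then a n (v + i) (v + j)
  else if i + r < j then a n (v + i) (v + j - pbar)
  else a n (v + i) (v + j + pbar).

From mathcomp Require Import all_boot zify.
Set Implicit Arguments. Unset Strict Implicit. Unset Printing Implicit Defensive.

(* Every row of A(n) contains exactly n+1 ones: a row can only run out of
   admissible columns while it has fewer than n+1 ones if rows above still
   have ones far to the right, and by induction the rows above have finite
   support.  Row i of B lists the entries of row v+i of A(n) in the pbar
   columns congruent to v+1, ..., v+pbar modulo pbar that lie in a window of
   width pbar around the diagonal entry (v+i, v+i).  Since v+i > pp, all ones
   of that row are within b(n) < r of the diagonal, hence inside the window,
   so row i of B has exactly n+1 ones. *)

Section Recurrence.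
Variable n : nat.

Lemma eq_decide A A' k l s : 1 <= l ->
  (forall i j, 1 <= i < k -> 1 <= j <= l -> A i j = A' i j) ->
  decide n A k l s = decide n A' k l s.
Proof.
move=> l_gt0 eqA; rewrite /decide.
rewrite (@eq_in_count _ _ (fun i => A' i l)); last first.
  by move=> i; rewrite mem_iota -subn1 => i_lt; apply: eqA; lia.
congr [&& _, _ & ~~ _]; apply: eq_in_has => i; rewrite mem_iota -subn1 => i_lt.
apply: eq_in_has => j; rewrite mem_iota -subn1 => j_lt.
by rewrite !eqA //; lia.
Qed.

Lemma size_rowpref A k l : size (rowpref n A k l) = l.
Proof. by elim: l => //= l IHl; rewrite size_rcons IHl. Qed.

Lemma nth_rowpref A k l l' j : j < l <= l' ->
  nth false (rowpref n A k l') j = nth false (rowpref n A k l) j.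
Proof.
case/andP=> lt_jl; elim: l' => [|l' IHl'] le_ll'; first by lia.
have [lt_l'l | le_ll''] := ltnP l' l; first by have -> : l = l'.+1 by lia.
by rewrite /= nth_rcons size_rowpref (leq_trans lt_jl le_ll'') IHl'.
Qed.

Lemma eq_rowpref A A' k l :
  (forall i j, 1 <= i < k -> 1 <= j <= l -> A i j = A' i j) ->
  rowpref n A k l = rowpref n A' k l.
Proof.
elim: l => //= l IHl eqA.
rewrite IHl; last by move=> i j i_lt j_le; apply: eqA; lia.
by rewrite (@eq_decide A A' k l.+1).
Qed.

Lemma size_tab w k : size (tab n w k) = k.
Proof. by elim: k => //= k IHk; rewrite size_rcons IHk. Qed.

Lemma nth_tab_last w k : nth [::] (tab n w k.+1) k = rowpref n (lookup (tab n w k)) k.+1 w.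
Proof. by rewrite /= nth_rcons size_tab ltnn eqxx. Qed.

Lemma lookup_tab_rows w k k' i j : 1 <= i <= k -> k <= k' ->
  lookup (tab n w k') i j = lookup (tab n w k) i j.
Proof.
move=> /andP[i_gt0 le_ik] le_kk'; rewrite /lookup; congr (nth false _ _).
elim: k' le_kk' => [|k' IHk'] le_kk'; first by lia.
have [lt_k'k | le_kk''] := ltnP k' k; first by have -> : k = k'.+1 by lia.
by rewrite /= nth_rcons size_tab ifT ?IHk' //; lia.
Qed.

Lemma lookup_tab_width k w w' i j : 1 <= i <= k -> 1 <= j <= minn w w' ->
  lookup (tab n w k) i j = lookup (tab n w' k) i j.
Proof.
elim: k i j => [|k IHk] i j i_le j_le; first by lia.
have [lt_ik | ge_ik] := ltnP i k.+1.
  by rewrite !(@lookup_tab_rows _ k k.+1) //; [apply: IHk | ..]; lia.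
have -> : i = k.+1 by lia.
rewrite /lookup !nth_tab_last.
rewrite (@nth_rowpref _ _ j w) ?(@nth_rowpref _ _ j w'); try lia.
by congr (nth false _ _); apply: eq_rowpref => i' j' *; apply: IHk; lia.
Qed.

Lemma a_lookup_tab w k i j : 1 <= i <= k -> 1 <= j <= w -> a n i j = lookup (tab n w k) i j.
Proof.
move=> i_le j_le; rewrite /a.
rewrite -(@lookup_tab_rows _ _ (maxn (maxn i j) k)); try lia.
rewrite (@lookup_tab_width _ _ w); try lia.
by apply: lookup_tab_rows; lia.
Qed.

Lemma a_decide k l : 1 <= k -> 1 <= l ->
  a n k l = decide n (a n) k l (map (a n k) (iota 1 l.-1)).
Proof.
case: k => // k _; case: l => // l _.
rewrite (@a_lookup_tab l.+1 k.+1) ?leqnn // /lookup nth_tab_last /=.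
rewrite nth_rcons size_rowpref ltnn eqxx.
have -> : rowpref n (lookup (tab n l.+1 k)) k.+1 l = map (a n k.+1) (iota 1 l).
  apply: (@eq_from_nth _ false); first by rewrite size_rowpref size_map size_iota.
  move=> j; rewrite size_rowpref => lt_jl.
  rewrite (nth_map 0) ?size_iota // nth_iota // (@a_lookup_tab l.+1 k.+1); try lia.
  by rewrite /lookup nth_tab_last add1n (@nth_rowpref _ _ l l.+1) //; lia.
by apply: eq_decide => // i j *; rewrite (@a_lookup_tab l.+1 k); lia.
Qed.

End Recurrence.

Section RowCount.
Variable n : nat.

Lemma count_a_iotaS k l :
  count (a n k) (iota 1 l.+1) = count (a n k) (iota 1 l) + a n k l.+1.
Proof. by rewrite -(addn1 l) iotaD count_cat /= add1n addn0 addn1. Qed.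

Lemma count_a_le k l : 1 <= k -> count (a n k) (iota 1 l) <= n.+1.
Proof.
move=> k_gt0; elim: l => // l IHl; rewrite count_a_iotaS.
case akl: (a n k l.+1); last by rewrite addn0.
by move: akl; rewrite a_decide // /decide count_map addn1 => /andP[].
Qed.

(* Once the rows above row k have no ones from column M on, condition (3)
   is void and condition (2) holds there, so row k fills up greedily. *)
Lemma count_a_fill k M : 1 <= k -> 1 <= M ->
    (forall i l, 1 <= i < k -> M <= l -> a n i l = false) ->
  forall t, minn n.+1 t <= count (a n k) (iota 1 (M + t)).
Proof.
move=> k_gt0 M_gt0 above0; elim=> [|t IHt]; first by rewrite minn0.
rewrite addnS count_a_iotaS.
have [c_lt | c_ge] := ltnP (count (a n k) (iota 1 (M + t))) n.+1; last by lia.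
suff -> : a n k (M + t).+1 by lia.
rewrite a_decide //= /decide count_map c_lt /=.
apply/andP; split.
  by rewrite (@eq_in_count _ _ pred0) ?count_pred0 // => i;
     rewrite mem_iota -subn1 => i_lt; apply: above0; lia.
apply/hasPn => i; rewrite mem_iota -subn1 => i_lt; apply/hasPn => j _.
by rewrite (above0 i (M + t).+1) ?andbF //; lia.
Qed.

Lemma a_bounded_support k : exists2 M, 1 <= M &
  forall i l, 1 <= i <= k -> M <= l -> a n i l = false.
Proof.
elim: k => [|k [M M_gt0 IHk]]; first by exists 1 => // i l; lia.
exists (M + n.+2) => [|i l i_le l_ge]; first by lia.
have [lt_ik | ge_ik] := ltnP i k.+1; first by apply: IHk; lia.
have -> : i = k.+1 by lia.
have above0 i' l' : 1 <= i' < k.+1 -> M <= l' -> a n i' l' = false.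
  by move=> i'_lt; apply: IHk; lia.
have filled := count_a_fill (ltn0Sn k) M_gt0 above0 (l.-1 - M).
apply/negbTE/negP; rewrite a_decide //; last by lia.
rewrite /decide count_map => /andP[c_lt _].
have {}c_lt : count (a n k.+1) (iota 1 l.-1) < n.+1 := c_lt.
move: filled; have -> : M + (l.-1 - M) = l.-1 by lia.
lia.
Qed.

Lemma count_a_row k : 1 <= k ->
  exists M, forall L, M <= L -> count (a n k) (iota 1 L) = n.+1.
Proof.
move=> k_gt0; have [M M_gt0 supp] := a_bounded_support k.-1.
have above0 i l : 1 <= i < k -> M <= l -> a n i l = false.
  by move=> i_lt; apply: supp; lia.
exists (M + n.+1) => L le_L.
have := count_a_fill k_gt0 M_gt0 above0 (L - M).
have := count_a_le L k_gt0; have -> : M + (L - M) = L by lia.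
lia.
Qed.

End RowCount.

Lemma eq_count_uniq (T : eqType) (P : pred T) (s1 s2 : seq T) :
  uniq s1 -> uniq s2 -> (forall x, P x -> (x \in s1) = (x \in s2)) ->
  count P s1 = count P s2.
Proof.
move=> s1_uniq s2_uniq eq_s; rewrite -!size_filter; apply: perm_size.
apply: uniq_perm; rewrite ?filter_uniq // => x; rewrite !mem_filter.
by case Px: (P x) => //=; apply: eq_s.
Qed.

(* a n k 0 is a junk value (it equals a n k 1), hence the positivity of s. *)
Lemma count_a_cover n k (s : seq nat) : 1 <= k -> uniq s -> all (leq 1) s ->
  (forall j, 1 <= j -> a n k j -> j \in s) -> count (a n k) s = n.+1.
Proof.
move=> k_gt0 s_uniq s_pos s_cover; have [M countM] := count_a_row n k_gt0.
rewrite -(countM (maxn M (\max_(j <- s) j))) ?leq_maxl //.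
apply: eq_count_uniq => // [|j akj]; first exact: iota_uniq.
rewrite mem_iota; apply/idP/idP => [j_in | /andP[j_gt0 _]]; last exact: s_cover.
have := @leq_bigmax_seq _ s xpredT id j j_in isT.
have := allP s_pos j j_in; rewrite /= add1n ltnS; lia.
Qed.

Lemma sum_nat_count (T : Type) (P : pred T) (s : seq T) :
  \sum_(x <- s) (P x : nat) = count P s.
Proof. by rewrite -sum1_count [RHS]big_mkcond; apply: eq_bigr => x _; case: (P x). Qed.

Definition Bcol (pb v i j : nat) : nat :=
  if (i <= j + pb./2) && (j <= i + pb./2) then v + j
  else if i + pb./2 < j then v + j - pb else v + j + pb.

Lemma Bmat_Bcol n pb v i j : Bmat n pb v i j = a n (v + i) (Bcol pb v i j).
Proof. by rewrite /Bmat /Bcol /=; case: ifP => //; case: ifP. Qed.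

Lemma half_addnn_leq k : k./2 + k./2 <= k.
Proof. by rewrite addnn -{2}(odd_double_half k) leq_addl. Qed.

Lemma BcolP pb v i j :
  [\/ [/\ i <= j + pb./2, j <= i + pb./2 & Bcol pb v i j = v + j],
      i + pb./2 < j /\ Bcol pb v i j = v + j - pb
    | j + pb./2 < i /\ Bcol pb v i j = v + j + pb].
Proof.
rewrite /Bcol; case: ifP => [/andP[le1 le2] | /negbT not_mid].
  by apply: Or31; split.
case: ifP => [lt_j | /negbT not_lt_j]; first by apply: Or32.
by apply: Or33; split => //; lia.
Qed.

Section Window.
Variables pb v i : nat.
Hypothesis le_pb_v : pb <= v.
Hypothesis i_in : 1 <= i <= pb.
Local Notation r := pb./2.

Lemma Bcol_gt0 j : 1 <= j -> 0 < Bcol pb v i j.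
Proof. by move=> j_gt0; case: (BcolP pb v i j) => [[_ _ ->] | [_ ->] | [_ ->]]; lia. Qed.

Lemma Bcol_inj : {in iota 1 pb &, injective (Bcol pb v i)}.
Proof.
move=> j1 j2; rewrite !mem_iota => j1_in j2_in.
by case: (BcolP pb v i j1) (BcolP pb v i j2)
   => [[? ? ->] | [? ->] | [? ->]]
   [[? ? ->] | [? ->] | [? ->]]; lia.
Qed.

Lemma Bcol_window x : v + i < x + r -> x < v + i + r ->
  x \in map (Bcol pb v i) (iota 1 pb).
Proof.
move=> lo hi; have r2 := half_addnn_leq pb.
have [le_xv | lt_vx] := leqP x v.
  apply/mapP; exists (x + pb - v); first by rewrite mem_iota; lia.
  by case: (BcolP pb v i (x + pb - v)) => [[? ? ->] | [? ->] | [? ->]]; lia.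
have [le_x | lt_x] := leqP x (v + pb).
  apply/mapP; exists (x - v); first by rewrite mem_iota; lia.
  by case: (BcolP pb v i (x - v)) => [[? ? ->] | [? ->] | [? ->]]; lia.
apply/mapP; exists (x - v - pb); first by rewrite mem_iota; lia.
by case: (BcolP pb v i (x - v - pb)) => [[? ? ->] | [? ->] | [? ->]]; lia.
Qed.

End Window.

Theorem theorem4p1 (n p pp bn m v : nat) :
  0 < n ->
  is_period n p ->
  is_preperiod n p pp ->
  is_bmax n pp bn ->
  1 <= m ->
  bn < (p * m)./2 ->
  pp + p * m <= v ->
  forall i, 1 <= i <= p * m ->
    \sum_(1 <= j < (p * m).+1) (Bmat n (p * m) v i j : nat) = n.+1.
Proof.
move=> _ _ _ [_ bn_max] _ bn_lt_r le_v i i_in.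
set pb := p * m in bn_lt_r le_v i_in *.
have le_pb_v : pb <= v by lia.
have row_gt0 : 1 <= v + i by lia.
rewrite /index_iota subSS subn0.
under eq_bigr do rewrite Bmat_Bcol.
rewrite -(big_map (Bcol pb v i) xpredT (fun x => a n (v + i) x : nat)) sum_nat_count.
apply: count_a_cover => //.
- by rewrite map_inj_in_uniq ?iota_uniq //; apply: Bcol_inj.
- by apply/allP => x /mapP[j]; rewrite mem_iota => /andP[j_gt0 _] ->; apply: Bcol_gt0.
- move=> x x_gt0 ax.
  have near : absdiff x (v + i) <= bn by apply: bn_max => //; lia.
  by apply: Bcol_window => //; move: near; rewrite /absdiff; lia.
Qed.
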